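(* Let $F$ be a smooth symmetric 2-cotensor on the unit sphere $\mathbb{S}^{n-1}\subset\mathbb{R}^n$, and write $F(x,V,V)$ for its value at $x\in\mathbb{S}^{n-1}$ on $V\in T_x\mathbb{S}^{n-1}$. Suppose there is $k\in\mathbb{N}$ such that for every unit speed great-circle geodesic $\gamma$ of $\mathbb{S}^{n-1}$, $$I_k(F,\gamma)=\int_0^\pi F(\gamma(t),\gamma'(t),\gamma'(t))(\sin t)^k\,dt=0.$$ Then (i) $F$ has the parity of $k$: for every such $\gamma$ and all $t$, $F(\gamma(t),\gamma'(t),\gamma'(t))=(-1)^kF(\gamma(t+\pi),\gamma'(t+\pi),\gamma'(t+\pi))$; (ii) for every such $\gamma$ and every polynomial $p$ on $\mathbb{R}^n$ of degree at most $k$, $$\int_0^{2\pi}p(\gamma(t))\,F(\gamma(t),\gamma'(t),\gamma'(t))\,dt=0.$$ *)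

From HB Require Import structures.
From mathcomp Require Import all_boot all_order all_algebra.
From mathcomp Require Import all_classical all_reals all_analysis.
From mathcomp Require mpoly.
Set Implicit Arguments. Unset Strict Implicit. Unset Printing Implicit Defensive.
Import Order.TTheory GRing.Theory Num.Theory.
Import numFieldNormedType.Exports.
Local Open Scope ring_scope.

Section Defs.
Variables (R : realType) (n : nat).

Definition dotv (x y : 'rV[R]_n) : R := (x *m y^T) 0 0.

(* (x, v) determines a unit speed great-circle geodesic of S^{n-1}:
   x on the sphere, v a unit tangent vector at x. *)
Definition unit_geod (x v : 'rV[R]_n) : Prop :=
  [/\ dotv x x = 1, dotv v v = 1 & dotv x v = 0].

Definition gc (x v : 'rV[R]_n) (t : R) : 'rV[R]_n := cos t *: x + sin t *: v.
Definition gc' (x v : 'rV[R]_n) (t : R) : 'rV[R]_n := - sin t *: x + cos t *: v.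

(* F(y, V, V) for a symmetric 2-cotensor represented by a matrix field. *)
Definition tens (F : 'rV[R]_n -> 'M[R]_n) (y V : 'rV[R]_n) : R :=
  (V *m F y *m V^T) 0 0.

Fixpoint iter_dderiv (vs : seq 'rV[R]_n) (f : 'rV[R]_n -> R) : 'rV[R]_n -> R :=
  match vs with
  | [::] => f
  | w :: vs' => fun y => derive (iter_dderiv vs' f) y w
  end.

Definition smooth (f : 'rV[R]_n -> R) : Prop :=
  forall vs, continuous (iter_dderiv vs f) /\
             forall y w, derivable (iter_dderiv vs f) y w.

Definition Ik (k : nat) (F : 'rV[R]_n -> 'M[R]_n) (x v : 'rV[R]_n) : \bar R :=
  (\int[lebesgue_measure]_(t in `[0%R, (pi : R)]) (tens F (gc x v t) (gc' x v t) * sin t ^+ k)%:E)%E.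

Definition peval (p : mpoly.mpoly n R) (y : 'rV[R]_n) : R :=
  mpoly.meval (fun i => y 0 i) p.

Definition pdeg_le (p : mpoly.mpoly n R) (k : nat) : bool :=
  all (fun m => (mpoly.mdeg m <= k)%N) (mpoly.msupp p).

End Defs.

From HB Require Import structures.
From mathcomp Require Import all_boot all_order all_algebra.
From mathcomp Require Import all_classical all_reals all_analysis.
From mathcomp Require mpoly.
Import Order.TTheory GRing.Theory Num.Theory.
Import numFieldNormedType.Exports.
Local Open Scope ring_scope.
From mathcomp Require Import ring zify.

Set Implicit Arguments.
Unset Strict Implicit.
Unset Printing Implicit Defensive.

(* Fix a geodesic and write f t = F(gamma t, gamma' t, gamma' t).  The geodesic
   through gamma s is gamma shifted by s, so the hypothesis says that the window
   integrals S_j s = \int_0^pi f (s + u) (sin u)^j du vanish for j = k and all s.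
   Differentiating \int_0^pi f (s + u) g u du = 0 in s and integrating by parts
   gives f (s + pi) g pi - f s g 0 = \int_0^pi f (s + u) g' u du.  With
   g = sin^(j+1) this turns S_(j+1) = 0 into C_j = 0, where
   C_j s = \int_0^pi f (s + u) (sin u)^j cos u du, and with g = sin^(j+1) cos it
   turns S_(j+2) = 0 into S_j = 0.  Descending to S_0 = 0 (g = 1) or to
   S_1 = C_0 = 0 (g = cos) gives f (s + pi) = (-1)^k f s.
   Along gamma a polynomial of degree <= k is a polynomial of degree <= k in
   cos t and sin t.  Using cos^2 = 1 - sin^2, a monomial cos^a sin^b with
   a + b = k mod 2 integrates against f to 0 already over [0, pi] by the vanishing
   of the S_j and C_j; the other monomials cancel between [0, pi] and [pi, 2 pi]
   by the parity of f.  Only the continuity of F and its values F(y, V, V) are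
   used. *)

Section Calculus.
Local Open Scope classical_set_scope.
Context {R : realType}.
Notation mu := (@lebesgue_measure R).
Implicit Types (f g h P : R -> R) (a b c s t x dh dP : R).

Lemma continuous_integrable_itv h a b : continuous h ->
  mu.-integrable `[a, b] (EFin \o h).
Proof.
move=> ch; apply: continuous_compact_integrable; first exact: segment_compact.
exact: continuous_subspaceT.
Qed.

Lemma continuous_integral_itvE h a b : continuous h ->
  (\int[mu]_(x in `[a, b]) (h x)%:E)%E = (\int[mu]_(x in `[a, b]) h x)%:E.
Proof.
move=> ch; rewrite fineK //.
exact: integrable_fin_num (continuous_integrable_itv a b ch).
Qed.

Lemma is_derive_continuous h x dh : is_derive x 1 h dh -> {for x, continuous h}.
Proof.
by move=> d; apply/differentiable_continuous/derivable1_diffP; exact: ex_derive.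
Qed.

Lemma is_derive_shiftr P c x dP :
  is_derive (x + c) 1 P dP -> is_derive x 1 (fun s => P (s + c)) dP.
Proof.
move=> d; have dxc : is_derive x 1 (fun s : R => s + c) 1.
  by apply: is_derive_eq; rewrite addr0.
by have := @is_derive1_comp R P (fun s => s + c) x dP 1 d dxc; rewrite mulr1.
Qed.

Lemma is_derive_shiftl P c x dP :
  is_derive (c + x) 1 P dP -> is_derive x 1 (fun s => P (c + s)) dP.
Proof.
rewrite addrC => /is_derive_shiftr.
by under [fun s => P (s + c)]eq_fun do rewrite addrC.
Qed.

Lemma is_deriveMr h c x dh :
  is_derive x 1 h dh -> is_derive x 1 (fun s => h s * c) (dh * c).
Proof.
move=> d; have := is_deriveM d (is_derive_cst c x 1).
by move=> dM; apply: is_derive_eq; rewrite scaler0 add0r /GRing.scale /= mulrC.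
Qed.

Lemma is_derive_parameterized_integral f a t : continuous f -> a < t ->
  is_derive t 1 (fun t => parameterized_integral mu a t f) (f t).
Proof.
move=> cf at_.
have [d e] := continuous_FTC1_closed (ltr_pwDr ltr01 (lexx t))
  (continuous_integrable_itv a (t + 1) cf) at_ (cf t).
by apply: DeriveDef => //; rewrite -derive1E.
Qed.

Lemma continuous_shiftM f h s : continuous f -> continuous h ->
  continuous (fun u => f (s + u) * h u).
Proof.
move=> cf ch u; apply: cvgM (ch u).
apply: continuous_comp; last exact: cf.
by apply: cvgD; [exact: cst_continuous|].
Qed.

Lemma continuous_norm h : continuous h -> continuous (fun t => `|h t|).
Proof. by move=> ch x; apply: continuous_comp; [exact: ch|exact: norm_continuous]. Qed.

Lemma continuous_exprn h n : continuous h -> continuous (fun t => h t ^+ n).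
Proof.
move=> ch; elim: n => [|n IH] x.
  by under eq_fun do rewrite expr0; exact: cst_continuous.
by under eq_fun do rewrite exprS; apply: cvgM; [exact: ch|exact: IH].
Qed.

Lemma is_derive_sinX j x :
  is_derive x 1 (fun u : R => sin u ^+ j) (j%:R * sin x ^+ j.-1 * cos x).
Proof.
by have := is_deriveX j (is_derive_sin x); rewrite exprfctE => d; apply: is_derive_eq.
Qed.

Lemma continuous_sumr (I : Type) (r : seq I) (F : I -> R -> R) :
  (forall i, continuous (F i)) -> continuous (fun t => \sum_(i <- r) F i t).
Proof. by move=> cF; apply: continuous_big => //; exact: add_continuous. Qed.

Lemma bounded_shiftM f h c d : continuous f -> continuous h -> c <= d ->
  exists2 M, 0 <= M & forall x u, c <= x <= d -> 0 <= u <= pi ->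
    `|f (x + u) * h u| <= M.
Proof.
move=> cf ch cd; have pi_gt0 := pi_gt0 R.
have cdpi : c <= d + pi by rewrite (le_trans cd) // lerDl ltW.
have [c1 _ max_f] := @EVT_max R (fun t => `|f t|) c (d + pi) cdpi
  (continuous_subspaceT (continuous_norm cf)).
have [c2 _ max_h] := @EVT_max R (fun t => `|h t|) 0 pi (ltW pi_gt0)
  (continuous_subspaceT (continuous_norm ch)).
exists (`|f c1| * `|h c2|) => [|x u /andP[cx xd] /andP[u0 upi]]; first exact: mulr_ge0.
rewrite normrM ler_pM //; [apply: max_f|apply: max_h]; rewrite in_itv/= ?u0 ?upi //.
by rewrite lerD // (le_trans cx) // lerDl.
Qed.

Lemma Rintegral_is_derive (phi Phi : R -> R) (a b : R) : a < b -> continuous phi ->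
  (forall x, a <= x <= b -> is_derive x 1 Phi (phi x)) ->
  \int[mu]_(x in `[a, b]) phi x = Phi b - Phi a.
Proof.
move=> ab cphi dPhi; have dPhi_oo x : x \in `]a, b[%R -> is_derive x 1 Phi (phi x).
  by rewrite in_itv/= => /andP[/ltW ax /ltW xb]; apply: dPhi; rewrite ax xb.
rewrite /Rintegral (continuous_FTC2 (F := Phi) ab (continuous_subspaceT cphi)) //.
- split.
  + by move=> x /dPhi_oo[].
  + by apply/cvg_at_right_filter/(is_derive_continuous (dPhi a _)); rewrite lexx ltW.
  + by apply/cvg_at_left_filter/(is_derive_continuous (dPhi b _)); rewrite lexx ltW.
- by move=> x /dPhi_oo dx; rewrite derive1E derive_val.
Qed.

Lemma Rintegral_0_2pi (phi : R -> R) : continuous phi ->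
  \int[mu]_(x in `[0, 2 * pi]) phi x =
  \int[mu]_(x in `[0, pi]) phi x + \int[mu]_(x in `[0, pi]) phi (x + pi).
Proof.
move=> cphi; have pi_gt0 := pi_gt0 R.
pose Q t := parameterized_integral mu (-1) t phi.
have dQ (b x : R) : 0 <= x <= b -> is_derive x 1 Q (phi x).
  case/andP=> x0 _; apply: is_derive_parameterized_integral => //.
  by rewrite (lt_le_trans _ x0) // ltrN10.
have dQpi (b x : R) : 0 <= x <= b -> is_derive x 1 (fun x => Q (x + pi)) (phi (x + pi)).
  by case/andP=> x0 _; apply/is_derive_shiftr/(dQ (x + pi)); rewrite lexx addr_ge0 // ltW.
have cphi_pi : continuous (fun x => phi (x + pi)).
  move=> x; apply: continuous_comp; last exact: cphi.
  by apply: cvgD; [exact: cvg_id|exact: cvg_cst].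
have two_pi_gt0 : 0 < 2 * pi :> R by rewrite mulr_gt0.
rewrite (Rintegral_is_derive two_pi_gt0 cphi (dQ _)) (Rintegral_is_derive pi_gt0 cphi (dQ _)).
rewrite (Rintegral_is_derive pi_gt0 cphi_pi (dQpi _)).
by rewrite add0r mulr2n mulrDl mul1r; ring.
Qed.

End Calculus.

Section Window.
Local Open Scope classical_set_scope.
Context {R : realType}.
Notation mu := (@lebesgue_measure R).
Variables (f : R -> R) (a : R).
Hypothesis cf : continuous f.
Implicit Types (s t u x : R).
Local Notation P t := (parameterized_integral mu a t f).

Let is_derive_P_shift s u : a < s + u -> is_derive u 1 (fun u => P (s + u)) (f (s + u)).
Proof.
move=> asu; apply: (is_derive_shiftl (P := fun t => P t)).
exact: is_derive_parameterized_integral.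
Qed.

Lemma window_integration_by_parts (g g' : R -> R) s :
  (forall x, is_derive x 1 g (g' x)) -> continuous g' -> a < s ->
  \int[mu]_(u in `[0, pi]) (P (s + u) * g' u) =
  P (s + pi) * g pi - P s * g 0 - \int[mu]_(u in `[0, pi]) (f (s + u) * g u).
Proof.
move=> dg cg' as_; have pi_gt0 := pi_gt0 R.
have dPs u : 0 <= u -> is_derive u 1 (fun u => P (s + u)) (f (s + u)).
  by move=> u0; apply: is_derive_P_shift; rewrite (lt_le_trans as_) ?lerDl.
rewrite (Rintegration_by_parts (G := g) (f := fun u => f (s + u))) ?addr0 //.
- apply: continuous_subspaceT => u; apply: continuous_comp; last exact: cf.
  by apply: cvgD; [exact: cst_continuous|].
- split.
  + by move=> u; rewrite in_itv/= => /andP[/ltW/dPs[]].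
  + exact/cvg_at_right_filter/(is_derive_continuous (dPs 0 (lexx 0))).
  + exact/cvg_at_left_filter/(is_derive_continuous (dPs pi (ltW pi_gt0))).
- move=> u; rewrite in_itv/= => /andP[/ltW/dPs du _].
  by rewrite derive1E derive_val.
- exact: continuous_subspaceT.
- split.
  + by move=> u _; case: (dg u).
  + exact/cvg_at_right_filter/(is_derive_continuous (dg 0)).
  + exact/cvg_at_left_filter/(is_derive_continuous (dg pi)).
- by move=> u _; rewrite derive1E derive_val.
Qed.

Lemma is_derive_window_integral (h : R -> R) s : continuous h -> a < s ->
  is_derive s 1 (fun s => \int[mu]_(u in `[0, pi]) (P (s + u) * h u))
    (\int[mu]_(u in `[0, pi]) (f (s + u) * h u)).
Proof.
move=> ch as_; pose Ph x u := P (x + u) * h u.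
have as1 : a <= s + 1 by rewrite ltW // (lt_le_trans as_) // lerDl.
have [M M_ge0 Mfh] := bounded_shiftM cf ch as1.
have Ipos x u : `]a, s + 1[ x -> `[0, pi] u -> a < x + u.
  by rewrite /= !in_itv/= => /andP[ax _] /andP[u0 _]; rewrite (lt_le_trans ax) ?lerDl.
have dPh x u : `]a, s + 1[ x -> `[0, pi] u ->
    is_derive x 1 (Ph ^~ u) (f (x + u) * h u).
  move=> Ix Iu; apply: is_deriveMr; apply: (is_derive_shiftr (P := fun t => P t)).
  exact: is_derive_parameterized_integral (Ipos x u Ix Iu).
have Is : `]a, s + 1[ s by rewrite /= in_itv/= as_ ltrDl ltr01.
have intPh x : `]a, s + 1[ x -> mu.-integrable `[0, pi] (EFin \o Ph x).
  move=> Ix; apply: continuous_compact_integrable; first exact: segment_compact.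
  apply: continuous_in_subspaceT => u; rewrite inE => Iu; apply: cvgM (ch u).
  exact: is_derive_continuous (is_derive_P_shift (Ipos x u Ix Iu)).
have derPh x u : `]a, s + 1[ x -> `[0, pi] u -> derivable (Ph ^~ u) x 1.
  by move=> Ix Iu; case: (dPh x u Ix Iu).
have Mub x u : `]a, s + 1[ x -> `[0, pi] u -> `|partial1of2 Ph x u| <= M.
  move=> Ix Iu; have := dPh x u Ix Iu; rewrite partial1of2E => dx; rewrite derive_val.
  apply: Mfh; last by move: Iu; rewrite /= in_itv.
  by move: Ix; rewrite /= in_itv/= => /andP[/ltW -> /ltW ->].
have intM : mu.-integrable `[0, pi] (EFin \o cst M).
  exact/continuous_integrable_itv/cst_continuous.
apply: DeriveDef.
  exact: (derivable_under_integral (mu := mu) (measurable_itv _) Is intPh derPh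
    (fun=> M_ge0) intM Mub).
rewrite -derive1E (differentiation_under_integral (mu := mu) (measurable_itv _) Is
  intPh derPh (fun=> M_ge0) intM Mub).
apply: eq_Rintegral => u; rewrite inE => Iu.
by have := dPh s u Is Iu; rewrite /= partial1of2E => ds; rewrite derive_val.
Qed.

End Window.

Section SinMoments.
Local Open Scope classical_set_scope.
Context {R : realType}.
Notation mu := (@lebesgue_measure R).
Implicit Types (s t u x : R).

Definition sin_moment (f : R -> R) j s :=
  \int[mu]_(u in `[0, pi]) (f (s + u) * sin u ^+ j).
Definition sin_cos_moment (f : R -> R) j s :=
  \int[mu]_(u in `[0, pi]) (f (s + u) * (sin u ^+ j * cos u)).

Variable f : R -> R.
Hypothesis cf : continuous f.

Lemma window_by_parts (g g' : R -> R) :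
  (forall x, is_derive x 1 g (g' x)) -> continuous g' ->
  (forall s, \int[mu]_(u in `[0, pi]) (f (s + u) * g u) = 0) ->
  forall s, f (s + pi) * g pi - f s * g 0 =
            \int[mu]_(u in `[0, pi]) (f (s + u) * g' u).
Proof.
move=> dg cg' fg0 s; pose a := s - 1.
have as_ : a < s by rewrite /a ltrBlDr ltrDl.
pose P t := parameterized_integral mu a t f.
pose Bd s := P (s + pi) * g pi - P s * g 0.
(* f is only continuous, so it is the integrated-by-parts form
   \int_0^pi P (s + u) g' u du, with P a primitive of f, that is differentiated. *)
have near_Bd : \forall s' \near s,
    Bd s' = \int[mu]_(u in `[0, pi]) (P (s' + u) * g' u).
  near=> s'; rewrite window_integration_by_parts // ?fg0 ?subr0 //.
  by near: s'; exact: (cvgr_gt s (@cvg_id _ _)).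
have dBd : is_derive s 1 Bd (f (s + pi) * g pi - f s * g 0).
  apply: is_deriveB; apply: is_deriveMr; last exact: is_derive_parameterized_integral.
  apply/is_derive_shiftr/is_derive_parameterized_integral => //.
  by rewrite ltr_wpDr // ltW // pi_gt0.
have := near_eq_is_derive near_Bd dBd.
have := is_derive_window_integral cf cg' as_.
by move=> [_ <-] [_ <-].
Unshelve. all: by end_near.
Qed.

Let window_integralZ c (h : R -> R) s : continuous h ->
  \int[mu]_(u in `[0, pi]) (f (s + u) * (c * h u)) =
  c * \int[mu]_(u in `[0, pi]) (f (s + u) * h u).
Proof.
move=> ch; rewrite -RintegralZl //; last exact/continuous_integrable_itv/continuous_shiftM.
by apply: eq_Rintegral => u _; rewrite mulrCA.
Qed.

Let continuous_sinX j : continuous (fun u : R => sin u ^+ j).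
Proof. exact/continuous_exprn/continuous_sin. Qed.

Let continuous_sinXcos j : continuous (fun u : R => sin u ^+ j * cos u).
Proof. by move=> x; apply: cvgM; [exact: continuous_sinX|exact: continuous_cos]. Qed.

Let continuous_cst_sinX c j : continuous (fun u : R => c * sin u ^+ j).
Proof. by move=> x; apply: cvgM; [exact: cst_continuous|exact: continuous_sinX]. Qed.

Let continuous_cst_sinXcos c j : continuous (fun u : R => c * sin u ^+ j * cos u).
Proof. by move=> x; apply: cvgM; [exact: continuous_cst_sinX|exact: continuous_cos]. Qed.

Lemma sin_cos_moment_eq0 j : (forall s, sin_moment f j.+1 s = 0) ->
  forall s, sin_cos_moment f j s = 0.
Proof.
move=> S0 s.
have := window_by_parts (is_derive_sinX j.+1) (continuous_cst_sinXcos (c := j.+1%:R) (j := j)) S0 s.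
rewrite sinpi sin0 expr0n /= !mulr0 subr0.
under eq_Rintegral do rewrite -mulrA.
rewrite window_integralZ; last exact: continuous_sinXcos.
by move/esym/eqP; rewrite mulf_eq0 pnatr_eq0 => /eqP.
Qed.

Lemma sin_moment_eq0_step j : (forall s, sin_moment f j.+2 s = 0) ->
  forall s, sin_moment f j s = 0.
Proof.
move=> S0 s; have C0 := sin_cos_moment_eq0 S0.
pose g' u := j.+1%:R * sin u ^+ j - j.+2%:R * sin u ^+ j.+2.
have dg x : is_derive x 1 (fun u => sin u ^+ j.+1 * cos u) (g' x).
  have dM := is_deriveM (is_derive_sinX j.+1 x) (is_derive_cos x).
  apply: (is_derive_eq dM).
  have cos2 : cos x ^+ 2 = 1 - sin x ^+ 2 by rewrite -(cos2Dsin2 x) addrK.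
  rewrite /g' /GRing.scale /= -[j.+2]addn1 natrD addn1 !exprS.
  rewrite (_ : cos x * _ = j.+1%:R * sin x ^+ j * cos x ^+ 2); last by ring.
  by rewrite cos2; ring.
have cg' : continuous g'.
  by move=> x; apply: cvgB; exact: continuous_cst_sinX.
have := window_by_parts dg cg' C0 s.
rewrite sinpi sin0 !expr0n /= !mul0r !mulr0 subr0 /g'.
under eq_Rintegral do rewrite mulrBr.
rewrite RintegralB //;
  try exact/continuous_integrable_itv/continuous_shiftM/continuous_cst_sinX.
rewrite !window_integralZ // -/(sin_moment f j s) -/(sin_moment f j.+2 s) S0.
by rewrite mulr0 subr0 => /esym/eqP; rewrite mulf_eq0 pnatr_eq0 => /eqP.
Qed.

Lemma sin_moment_eq0_parity k : (forall s, sin_moment f k s = 0) ->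
  forall j, (j <= k)%N -> odd j = odd k -> forall s, sin_moment f j s = 0.
Proof.
move=> Sk j jk ojk; have [i ki] : exists i, k = (j + i.*2)%N.
  exists (k - j)./2; have : odd (k - j) = false by rewrite oddB // ojk addbb.
  lia.
rewrite {}ki in Sk; elim: i Sk => [|i IH] Si; first by rewrite addn0 in Si.
by apply/IH/sin_moment_eq0_step; rewrite -!addnS.
Qed.

Lemma sin_cos_moment_eq0_parity k : (forall s, sin_moment f k s = 0) ->
  forall j, (j < k)%N -> odd j != odd k -> forall s, sin_cos_moment f j s = 0.
Proof.
move=> Sk j jk ojk; apply/sin_cos_moment_eq0/(sin_moment_eq0_parity Sk) => //.
by move: ojk; rewrite /=; case: (odd j); case: (odd k).
Qed.

Lemma sin_moment0_periodic : (forall s, sin_moment f 0 s = 0) ->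
  forall s, f (s + pi) = f s.
Proof.
move=> S0 s.
have := window_by_parts (is_derive_sinX 0) (continuous_cst_sinXcos (c := 0%:R) (j := 0)) S0 s.
under eq_Rintegral do rewrite !mul0r mulr0.
rewrite Rintegral_cst // mul0r !expr0 !mulr1.
by move/eqP; rewrite subr_eq0 => /eqP.
Qed.

Lemma sin_moment1_antiperiodic : (forall s, sin_moment f 1 s = 0) ->
  forall s, f (s + pi) = - f s.
Proof.
move=> S1 s; have C0 s' : \int[mu]_(u in `[0, pi]) (f (s' + u) * cos u) = 0.
  rewrite -[RHS](sin_cos_moment_eq0 S1 s'); apply: eq_Rintegral => u _.
  by rewrite expr0 mul1r.
have cNsin : continuous (fun u : R => - sin u) by move=> x; apply: cvgN; exact: continuous_sin.
have := window_by_parts (@is_derive_cos R) cNsin C0 s.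
rewrite cospi cos0 mulr1 mulrN1 (_ : \int[mu]_(u in _) _ = - sin_moment f 1 s).
  by rewrite S1 oppr0 => /eqP; rewrite subr_eq0 => /eqP <-; rewrite opprK.
rewrite -mulN1r -window_integralZ; last exact: continuous_sinX.
by apply: eq_Rintegral => u _; rewrite expr1 mulN1r.
Qed.

Lemma sin_moment_eq0_shift_pi k : (forall s, sin_moment f k s = 0) ->
  forall s, f (s + pi) = (-1) ^+ k * f s.
Proof.
move=> Sk s; have ok : (odd k <= k)%N by lia.
have := sin_moment_eq0_parity Sk ok.
rewrite -signr_odd; case: (odd k) => /(_ (oddb _)) S.
  by rewrite expr1 mulN1r sin_moment1_antiperiodic.
by rewrite expr0 mul1r sin_moment0_periodic.
Qed.

End SinMoments.

Section TrigPoly.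
Context {R : realType}.
Implicit Types (q : R -> R) (d : nat).

Inductive trig_poly d : (R -> R) -> Prop :=
| trig_poly_monom a b : (a + b <= d)%N -> trig_poly d (fun t => cos t ^+ a * sin t ^+ b)
| trig_polyD q1 q2 : trig_poly d q1 -> trig_poly d q2 -> trig_poly d (fun t => q1 t + q2 t)
| trig_polyZ c q : trig_poly d q -> trig_poly d (fun t => c * q t).
Arguments trig_poly_monom {d} a b.

Lemma eq_trig_poly d q q' : trig_poly d q -> q =1 q' -> trig_poly d q'.
Proof. by move=> dq /funext <-. Qed.

Lemma trig_poly_continuous d q : trig_poly d q -> continuous q.
Proof.
elim=> [a b _|q1 q2 _ c1 _ c2|c q0 _ cq] x.
- by apply: cvgM; apply: continuous_exprn; [exact: continuous_cos|exact: continuous_sin].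
- by apply: cvgD; [exact: c1|exact: c2].
- by apply: cvgM; [exact: cvg_cst|exact: cq].
Qed.

Lemma trig_poly1 : trig_poly 0 (fun=> 1).
Proof.
by apply: (eq_trig_poly (trig_poly_monom 0 0 (leqnn 0))) => t; rewrite !expr0 mulr1.
Qed.

Lemma trig_poly0 d : trig_poly d (fun=> 0).
Proof.
by apply: (eq_trig_poly (trig_polyZ 0 (trig_poly_monom 0 0 (leq0n d)))) => t; rewrite mul0r.
Qed.

Lemma trig_polyMlinear d q al be : trig_poly d q ->
  trig_poly d.+1 (fun t => (al * cos t + be * sin t) * q t).
Proof.
elim=> [a b abd|q1 q2 _ h1 _ h2|c q0 _ hq].
- have h1 : trig_poly d.+1 (fun t => cos t ^+ a.+1 * sin t ^+ b).
    by apply: trig_poly_monom; rewrite addSn.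
  have h2 : trig_poly d.+1 (fun t => cos t ^+ a * sin t ^+ b.+1).
    by apply: trig_poly_monom; rewrite addnS.
  apply: (eq_trig_poly (trig_polyD (trig_polyZ al h1) (trig_polyZ be h2))) => t.
  by rewrite !exprS; ring.
- by apply: (eq_trig_poly (trig_polyD h1 h2)) => t; rewrite mulrDr.
- by apply: (eq_trig_poly (trig_polyZ c hq)) => t; rewrite mulrCA.
Qed.

Lemma trig_polyXMlinear d e q al be : trig_poly d q ->
  trig_poly (e + d) (fun t => (al * cos t + be * sin t) ^+ e * q t).
Proof.
move=> dq; elim: e => [|e IH]; first by apply: (eq_trig_poly dq) => t; rewrite mul1r.
by apply: (eq_trig_poly (trig_polyMlinear al be IH)) => t; rewrite exprS mulrA.
Qed.

Lemma trig_poly_prod_linear (I : Type) (r : seq I) (m : I -> nat) (al be : I -> R) :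
  trig_poly (\sum_(i <- r) m i)%N
    (fun t => \prod_(i <- r) (al i * cos t + be i * sin t) ^+ m i).
Proof.
elim: r => [|i r IH].
  by rewrite big_nil; apply: (eq_trig_poly trig_poly1) => t; rewrite big_nil.
rewrite big_cons; apply: (eq_trig_poly (trig_polyXMlinear (m i) (al i) (be i) IH)) => t.
by rewrite big_cons.
Qed.

Lemma trig_poly_leq d d' q : (d <= d')%N -> trig_poly d q -> trig_poly d' q.
Proof.
move=> dd'; elim=> [a b abd|q1 q2 _ h1 _ h2|c q0 _ hq].
- exact/trig_poly_monom/(leq_trans abd).
- exact: trig_polyD.
- exact: trig_polyZ.
Qed.

Lemma trig_poly_sum (I : Type) (r : seq I) (P : pred I) (qs : I -> R -> R) d :
  all P r -> (forall i, P i -> trig_poly d (qs i)) ->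
  trig_poly d (fun t => \sum_(i <- r) qs i t).
Proof.
move=> Pr Pq; elim: r Pr => [_|i r IH /andP[Pi Pr]].
  by apply: (eq_trig_poly (trig_poly0 d)) => t; rewrite big_nil.
by apply: (eq_trig_poly (trig_polyD (Pq i Pi) (IH Pr))) => t; rewrite big_cons.
Qed.

End TrigPoly.

Section CosSinIntegrals.
Local Open Scope classical_set_scope.
Context {R : realType}.
Notation mu := (@lebesgue_measure R).
Variables (f : R -> R) (k : nat).
Hypotheses (cf : continuous f) (Sk : forall s, sin_moment f k s = 0).

Let continuous_cos_sin a b : continuous (fun u : R => cos u ^+ a * sin u ^+ b).
Proof.
move=> x; apply: cvgM; apply: continuous_exprn; [exact: continuous_cos|exact: continuous_sin].
Qed.

Let continuous_f_cos_sin a b : continuous (fun u => f u * (cos u ^+ a * sin u ^+ b)).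
Proof. by move=> x; apply: cvgM; [exact: cf|exact: continuous_cos_sin]. Qed.

Lemma cos_sin_window_eq0 a b : (a + b <= k)%N -> odd (a + b) = odd k ->
  \int[mu]_(u in `[0, pi]) (f u * (cos u ^+ a * sin u ^+ b)) = 0.
Proof.
elim/ltn_ind: a b => -[|[|a]] IH b abk oab.
- rewrite -[RHS](sin_moment_eq0_parity cf Sk abk oab 0).
  by apply: eq_Rintegral => u _; rewrite add0r expr0 mul1r.
- have bk : (b < k)%N by [].
  have ob : odd b != odd k by rewrite -oab addSn add0n /=; case: (odd b).
  rewrite -[RHS](sin_cos_moment_eq0_parity cf Sk bk ob 0).
  by apply: eq_Rintegral => u _; rewrite add0r expr1 (mulrC (cos u)).
- have cos2 (u : R) : cos u ^+ a.+2 * sin u ^+ b =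
      cos u ^+ a * sin u ^+ b - cos u ^+ a * sin u ^+ b.+2.
    have c2 : cos u ^+ 2 = 1 - sin u ^+ 2 by rewrite -(cos2Dsin2 u) addrK.
    by rewrite -[a.+2]addn2 -[b.+2]addn2 !exprD c2; ring.
  under eq_Rintegral do rewrite cos2 mulrBr.
  have oab' : odd (a + b) = odd k by rewrite -oab !addSn /= negbK.
  rewrite RintegralB //; try exact/continuous_integrable_itv/continuous_f_cos_sin.
  rewrite !IH ?subr0 ?addnS ?oab' //; lia.
Qed.

Lemma cos_sin_integral_eq0 a b : (a + b <= k)%N ->
  \int[mu]_(u in `[0, 2 * pi]) (cos u ^+ a * sin u ^+ b * f u) = 0.
Proof.
move=> abk; have cT : continuous (fun u => cos u ^+ a * sin u ^+ b * f u).
  by move=> x; apply: cvgM; [exact: continuous_cos_sin|exact: cf].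
rewrite Rintegral_0_2pi //.
set T := \int[mu]_(u in `[0, pi]) _.
have -> : \int[mu]_(u in `[0, pi]) (cos (u + pi) ^+ a * sin (u + pi) ^+ b * f (u + pi)) =
    (-1) ^+ (a + b + k) * T.
  rewrite -RintegralZl //; last exact: continuous_integrable_itv.
  apply: eq_Rintegral => u _; rewrite cosDpi sinDpi (sin_moment_eq0_shift_pi cf Sk).
  by rewrite (exprNn (cos u)) (exprNn (sin u)) !exprD; ring.
have [oab|oab] := eqVneq (odd (a + b)) (odd k).
  rewrite [T](_ : _ = 0) ?mulr0 ?addr0 // -(cos_sin_window_eq0 abk oab).
  by apply: eq_Rintegral => u _; rewrite mulrC.
rewrite -signr_odd oddD; move: oab.
by case: (odd (a + b)); case: (odd k) => //= _; rewrite ?expr1 mulN1r subrr.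
Qed.

Lemma trig_poly_integral_eq0 q : trig_poly k q ->
  \int[mu]_(t in `[0, 2 * pi]) (q t * f t) = 0.
Proof.
have intqf q' d : trig_poly d q' ->
    mu.-integrable `[0, 2 * pi] (EFin \o (fun t => q' t * f t)).
  move=> /trig_poly_continuous cq; apply: continuous_integrable_itv => x.
  by apply: cvgM; [exact: cq|exact: cf].
elim=> [a b abk|q1 q2 h1 i1 h2 i2|c q0 h iq].
- exact: cos_sin_integral_eq0.
- under eq_Rintegral do rewrite mulrDl.
  by rewrite RintegralD ?i1 ?i2 ?addr0 //; [exact: intqf h1|exact: intqf h2].
- under eq_Rintegral do rewrite -mulrA.
  by rewrite RintegralZl ?iq ?mulr0 //; exact: intqf h.
Qed.

End CosSinIntegrals.

Section Geodesics.
Context {R : realType} {n : nat}.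
Implicit Types (x v y : 'rV[R]_n) (s t : R).

Lemma dotv_lin (a b c d : R) x v :
  dotv (a *: x + b *: v) (c *: x + d *: v) =
  a * c * dotv x x + (a * d + b * c) * dotv x v + b * d * dotv v v.
Proof.
rewrite /dotv !mxE !mulr_sumr -!big_split /=; apply: eq_bigr => i _.
by rewrite !mxE; ring.
Qed.

Lemma gc_shift x v s t : gc (gc x v s) (gc' x v s) t = gc x v (s + t).
Proof. by apply/rowP => i; rewrite !mxE cosD sinD; ring. Qed.

Lemma gc'_shift x v s t : gc' (gc x v s) (gc' x v s) t = gc' x v (s + t).
Proof. by apply/rowP => i; rewrite !mxE cosD sinD; ring. Qed.

Lemma unit_geod_shift x v s : unit_geod x v -> unit_geod (gc x v s) (gc' x v s).
Proof.
case=> xx vv xv; split; rewrite /gc /gc' dotv_lin xx vv xv; last by ring.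
all: by rewrite -[RHS](cos2Dsin2 s); ring.
Qed.

Lemma tensE (F : 'rV[R]_n -> 'M[R]_n) y V :
  tens F y V = \sum_j (\sum_l V 0 l * F y l j) * V 0 j.
Proof.
rewrite /tens mxE; apply: eq_bigr => j _; rewrite !mxE.
by congr (_ * _); apply: eq_bigr => l _; rewrite mxE.
Qed.

Lemma continuous_tens_gc (F : 'rV[R]_n -> 'M[R]_n) x v :
  (forall i j, continuous (fun y => F y i j)) ->
  continuous (fun t => tens F (gc x v t) (gc' x v t)).
Proof.
move=> cF; have cgc : continuous (gc x v).
  by move=> t; apply: cvgD; apply: cvgZl; [exact: continuous_cos|exact: continuous_sin].
have cgc' l : continuous (fun t => gc' x v t 0 l).
  move=> t; rewrite /gc'; under eq_fun do rewrite !mxE.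
  apply: cvgD; apply: cvgM; try exact: cvg_cst.
    by apply: cvgN; exact: continuous_sin.
  exact: continuous_cos.
under eq_fun do rewrite tensE.
apply: continuous_sumr => j t; apply: cvgM; last exact: cgc'.
apply: continuous_sumr => l {}t; apply: cvgM; first exact: cgc'.
exact: continuous_comp (cgc t) (cF l j (gc x v t)).
Qed.

Lemma Ik_gc_shift k (F : 'rV[R]_n -> 'M[R]_n) x v s :
  (forall i j, continuous (fun y => F y i j)) ->
  Ik k F (gc x v s) (gc' x v s) =
  (sin_moment (fun t => tens F (gc x v t) (gc' x v t)) k s)%:E.
Proof.
move=> cF; rewrite /Ik; under eq_integral do rewrite gc_shift gc'_shift.
rewrite continuous_integral_itvE //.
apply: (continuous_shiftM (f := fun t => tens F (gc x v t) (gc' x v t))).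
  exact: continuous_tens_gc.
exact/continuous_exprn/continuous_sin.
Qed.

Lemma peval_gc (p : mpoly.mpoly n R) x v t :
  peval p (gc x v t) = \sum_(m <- mpoly.msupp p) mpoly.mcoeff m p *
    \prod_i (x 0 i * cos t + v 0 i * sin t) ^+ mpoly.fun_of_multinom m i.
Proof.
rewrite /peval mpoly.mevalE; apply: eq_bigr => m _; congr (_ * _).
by apply: eq_bigr => i _; rewrite !mxE (mulrC (cos t)) (mulrC (sin t)).
Qed.

Lemma trig_poly_peval_gc (p : mpoly.mpoly n R) k x v : pdeg_le p k ->
  trig_poly k (fun t => peval p (gc x v t)).
Proof.
move=> pk; pose q m t := mpoly.mcoeff m p *
  \prod_i (x 0 i * cos t + v 0 i * sin t) ^+ mpoly.fun_of_multinom m i.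
have qk (m : mpoly.multinom n) : (mpoly.mdeg m <= k)%N -> trig_poly k (q m).
  move=> mk; apply/trig_polyZ/(trig_poly_leq _ (trig_poly_prod_linear _ _ _ _)).
  by rewrite -mpoly.mdegE.
by apply: (eq_trig_poly (trig_poly_sum pk qk)) => t; rewrite peval_gc.
Qed.

End Geodesics.

Theorem lemma3p2 (R : realType) (n k : nat) (F : 'rV[R]_n -> 'M[R]_n)
  (Fsym : forall y, (F y)^T = F y)
  (Fsmooth : forall i j, smooth (fun y => F y i j))
  (HI : forall x v : 'rV[R]_n, unit_geod x v -> Ik k F x v = 0%E) :
  (forall x v : 'rV[R]_n, unit_geod x v -> forall t : R,
     tens F (gc x v t) (gc' x v t)
     = (-1) ^+ k * tens F (gc x v (t + pi)) (gc' x v (t + pi)))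
  /\
  (forall x v : 'rV[R]_n, unit_geod x v ->
   forall p : mpoly.mpoly n R, pdeg_le p k ->
     (\int[lebesgue_measure]_(t in `[0%R, (2 * pi : R)%R])
        (peval p (gc x v t) * tens F (gc x v t) (gc' x v t))%:E)%E = 0%E).
Proof.
have cF i j : continuous (fun y => F y i j) by case: (Fsmooth i j [::]).
have Sk x v : unit_geod x v ->
    forall s, sin_moment (fun t => tens F (gc x v t) (gc' x v t)) k s = 0.
  by move=> xv s; apply: EFin_inj; rewrite -Ik_gc_shift // HI //; exact: unit_geod_shift.
split=> x v xv; have cf := continuous_tens_gc (x := x) (v := v) cF.
  by move=> t; rewrite (sin_moment_eq0_shift_pi cf (Sk x v xv)) mulrA -expr2 sqrr_sign mul1r.
move=> p pk; have ppk := trig_poly_peval_gc x v pk.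
have cq := trig_poly_continuous ppk.
rewrite continuous_integral_itvE; last by move=> t; apply: cvgM; [exact: cq|exact: cf].
by rewrite (trig_poly_integral_eq0 cf (Sk x v xv) ppk).
Qed.
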